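(* Let $N=\{1,\dots,n\}$ and let $F:2^N\to\mathbb{R}$ be quasi-submodular. Run the minimization procedure (described in the context) once from $X_0=\emptyset$ and let $Q_+$ be its output, and once from $X_0=N$ and let $S_+$ be its output. Then every global minimizer of $F$ lies in the set interval lattice $[Q_+,S_+]$, i.e., for every $X_*\in\arg\min_{X\subseteq N}F(X)$ we have $Q_+\subseteq X_*\subseteq S_+$.
   Context: For $A\subseteq N$ and $i\in N$, write $A+i=A\cup\{i\}$, $A-i=A\setminus\{i\}$, and $F(i\mid A)=F(A+i)-F(A)$. A set function $F:2^N\to\mathbb{R}$ is quasi-submodular if for all $X,Y\subseteq N$ both hold: $F(X\cap Y)\ge F(X)\Rightarrow F(Y)\ge F(X\cup Y)$, and $F(X\cap Y)>F(X)\Rightarrow F(Y)>F(X\cup Y)$. For sets $A,B$, the set interval lattice is $[A,B]=\{U: A\subseteq U\subseteq B\}$. Minimization procedure: given $X_0\subseteq N$, for $t=0,1,2,\dots$: let $U_t=\{u\in N\setminus X_t: F(u\mid X_t)<0\}$ and $Y_t=X_t\cup U_t$; let $D_t=\{d\in X_t: F(d\mid Y_t-d)>0\}$ and $X_{t+1}=Y_t\setminus D_t$; if $X_{t+1}=X_t$, stop and output $X_t$; otherwise continue with $t+1$. *)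

(* Ground set N = {1..n} is modelled as 'I_n, subsets as {set 'I_n}. *)
From mathcomp Require Import all_boot all_order all_algebra.
Set Implicit Arguments. Unset Strict Implicit. Unset Printing Implicit Defensive.
Import Order.TTheory GRing.Theory Num.Theory.
Local Open Scope ring_scope.

Section QS.
Variables (R : realFieldType) (T : finType).

Definition marg (F : {set T} -> R) (i : T) (A : {set T}) : R :=
  F (i |: A) - F A.

Definition quasi_submodular (F : {set T} -> R) : Prop :=
  forall X Y : {set T},
    (F (X :&: Y) >= F X -> F Y >= F (X :|: Y)) /\
    (F (X :&: Y) > F X -> F Y > F (X :|: Y)).

Definition U_set (F : {set T} -> R) (X : {set T}) : {set T} :=
  [set u | (u \notin X) && (marg F u X < 0)].
Definition Y_set (F : {set T} -> R) (X : {set T}) : {set T} :=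
  X :|: U_set F X.
Definition D_set (F : {set T} -> R) (X : {set T}) : {set T} :=
  [set d | (d \in X) && (marg F d (Y_set F X :\ d) > 0)].
Definition mp_step (F : {set T} -> R) (X : {set T}) : {set T} :=
  Y_set F X :\: D_set F X.

Definition mp_iter (F : {set T} -> R) (X0 : {set T}) (t : nat) : {set T} :=
  iter t (mp_step F) X0.

Definition mp_output (F : {set T} -> R) (X0 : {set T}) (O : {set T}) : Prop :=
  exists t : nat,
    mp_step F (mp_iter F X0 t) = mp_iter F X0 t /\
    (forall s, (s < t)%N -> mp_step F (mp_iter F X0 s) <> mp_iter F X0 s) /\
    O = mp_iter F X0 t.

Definition global_minimizer (F : {set T} -> R) (X : {set T}) : Prop :=
  forall Y : {set T}, F X <= F Y.
End QS.

(* A step from X towards a global minimizer Xs can never leave the interval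
   [X, Xs] or [Xs, X] it starts in.  Adding an element u with F(u | X) < 0 to
   X ⊆ Xs: were u ∉ Xs, quasi-submodularity applied to X + u and Xs would give
   F(Xs + u) < F(Xs).  Removing an element d ∈ Xs from Y ⊇ Xs: since
   F(Xs - d) >= F(Xs), quasi-submodularity applied to Xs and Y - d gives
   F(Y - d) >= F(Y), i.e. F(d | Y - d) <= 0.  Hence the runs from the empty set
   and from the full set stay below, resp. above, every global minimizer. *)

From mathcomp Require Import all_boot all_order all_algebra.
Import Order.TTheory GRing.Theory Num.Theory.
Local Open Scope ring_scope.

Section MinimizerBounds.
Variables (R : realFieldType) (T : finType) (F : {set T} -> R) (Xs : {set T}).
Hypotheses (qsF : quasi_submodular F) (minXs : global_minimizer F Xs).

Lemma minimizer_mem_of_decrease (X : {set T}) (x : T) :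
  X \subset Xs -> F (x |: X) < F X -> x \in Xs.
Proof.
move=> sXXs decr; apply/negPn/negP => xNXs.
have xNX : x \notin X by apply: contra xNXs; apply: (subsetP sXXs).
have capE : (x |: X) :&: Xs = X.
  apply/setP => y; rewrite !inE; case: eqP => [->|_] /=.
    by rewrite (negbTE xNX) (negbTE xNXs).
  by apply/andb_idr/(subsetP sXXs).
have cupE : (x |: X) :|: Xs = x |: Xs.
  by rewrite -setUA (setUidPr sXXs).
have [_ strict] := qsF (x |: X) Xs.
rewrite capE cupE in strict.
by have := strict decr; rewrite ltNge minXs.
Qed.

Lemma minimizer_remove_not_decrease (Y : {set T}) (x : T) :
  Xs \subset Y -> x \in Xs -> F Y <= F (Y :\ x).
Proof.
move=> sXsY xXs.
have capE : Xs :&: (Y :\ x) = Xs :\ x.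
  by rewrite setIDA (setIidPl sXsY).
have cupE : Xs :|: (Y :\ x) = Y.
  rewrite -{1}(setD1K xXs) -setUA (setUidPr (setSD _ sXsY)).
  by rewrite setD1K // (subsetP sXsY).
have [weak _] := qsF Xs (Y :\ x).
by rewrite capE cupE in weak; apply: weak; apply: minXs.
Qed.

Lemma mp_step_sub_minimizer (X : {set T}) :
  X \subset Xs -> mp_step F X \subset Xs.
Proof.
move=> sXXs; apply/subsetP => x.
rewrite /mp_step /Y_set !inE => /andP[_] /orP[xX|]; first exact: (subsetP sXXs).
move=> /andP[_ margN]; apply: (minimizer_mem_of_decrease _ _ sXXs).
by rewrite -subr_lt0.
Qed.

Lemma minimizer_sub_mp_step (X : {set T}) :
  Xs \subset X -> Xs \subset mp_step F X.
Proof.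
move=> sXsX; apply/subsetP => x xXs.
have xX := subsetP sXsX x xXs.
have sXsY : Xs \subset Y_set F X by apply: subset_trans sXsX (subsetUl _ _).
rewrite /mp_step inE (subsetP sXsY x xXs) andbT /D_set inE xX /= -leNgt.
rewrite /marg setD1K ?(subsetP sXsY) // subr_le0.
exact: minimizer_remove_not_decrease.
Qed.

Lemma mp_iter_sub_minimizer (X0 : {set T}) (t : nat) :
  X0 \subset Xs -> mp_iter F X0 t \subset Xs.
Proof.
move=> sX0Xs; elim: t => [|t IH] //.
by rewrite /mp_iter iterS; apply: mp_step_sub_minimizer.
Qed.

Lemma minimizer_sub_mp_iter (X0 : {set T}) (t : nat) :
  Xs \subset X0 -> Xs \subset mp_iter F X0 t.
Proof.
move=> sXsX0; elim: t => [|t IH] //.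
by rewrite /mp_iter iterS; apply: minimizer_sub_mp_step.
Qed.

End MinimizerBounds.

Theorem theorem1 (R : realFieldType) (n : nat) (F : {set 'I_n} -> R)
    (Qp Sp : {set 'I_n}) :
  quasi_submodular F ->
  mp_output F set0 Qp ->
  mp_output F setT Sp ->
  forall Xs : {set 'I_n}, global_minimizer F Xs ->
    Qp \subset Xs /\ Xs \subset Sp.
Proof.
move=> qsF [t [_ [_ ->]]] [s [_ [_ ->]]] Xs minXs; split.
  exact: mp_iter_sub_minimizer (sub0set Xs).
exact: minimizer_sub_mp_iter (subsetT Xs).
Qed.
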